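(* Consider an $n$-qubit depth-$L$ circuit with $L$ layers of tensor-product local depolarizing noise, each layer applying to every qubit the single-qubit channel $\mathcal{D}(\tau)=(1-p)\tau+p\mathrm{Tr}[\tau]\mathbb{I}/2$ with $p\in(0,1)$. Suppose Probabilistic Error Cancellation mitigates each of these $nL$ single-qubit channels with the optimal quasiprobability decomposition $\mathcal{D}^{-1}=\big(1+\frac{3p}{4(1-p)}\big)\mathrm{id}-\sum_{i=1}^{3}\frac{p}{4(1-p)}\mathcal{P}_i$ ($\mathcal{P}_i$ conjugation by the Pauli matrices), whose error mitigation cost (sum of squared coefficients) is $\frac{4-2p+p^2}{4(1-p)^2}$, the total error mitigation cost $\gamma_{tot}$ being the product of the individual costs, and that the correction is perfect, so that mitigated cost differences equal noise-free ones. Suppose that the noise causes cost concentration $$\langle\Delta\widetilde{C}(\boldsymbol{\theta}_{i,*})\rangle_i=Aq^L\langle\Delta C(\boldsymbol{\theta}_{i,*})\rangle_i$$ for some constant $A\ne0$ and noise parameter $q\in(0,1)$, with $\langle\Delta C(\boldsymbol{\theta}_{i,*})\rangle_i\ne0$. Then the average relative resolvability is $$\overline{\chi}=\frac{1}{A^2q^{2L}}\big(Q(p)\big)^{nL},\qquad Q(p)=1-\frac{3p(2-p)}{4-p(2-p)},$$ and $Q(p)\in[0,1)$ for $p\in(0,1]$.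
   Context: $\boldsymbol{\theta}_*$ denotes the parameter vector of the global cost minimum, $\langle\cdot\rangle_i$ the average over accessible parameter vectors $\boldsymbol{\theta}_i$, $\Delta C(\boldsymbol{\theta}_{i,*})=C(\boldsymbol{\theta}_i)-C(\boldsymbol{\theta}_* )$ (noise-free), $\Delta\widetilde{C}$ the analogous noisy difference, and $\Delta C_m$ the mitigated one. The average relative resolvability is $\overline{\chi}=\frac{1}{\gamma_{tot}}\Big(\frac{\langle\Delta C_m(\boldsymbol{\theta}_{i,*})\rangle_i}{\langle\Delta\widetilde{C}(\boldsymbol{\theta}_{i,*})\rangle_i}\Big)^2$. *)

From mathcomp Require Import all_boot all_order all_algebra.
Set Implicit Arguments. Unset Strict Implicit. Unset Printing Implicit Defensive.
Import Order.TTheory GRing.Theory Num.Theory.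
Local Open Scope ring_scope.

Definition pec_coef {R : fieldType} (p : R) (i : 'I_4) : R :=
  if i == ord0 then 1 + 3 * p / (4 * (1 - p)) else - (p / (4 * (1 - p))).

Definition pec_cost {R : fieldType} (p : R) : R :=
  \sum_(i < 4) (pec_coef p i) ^+ 2.

Definition gamma_tot {R : fieldType} (n L : nat) (p : R) : R :=
  \prod_(k : 'I_n * 'I_L) pec_cost p.

Definition dcost {R : pzRingType} {T I : Type} (C : T -> R) (theta : I -> T)
  (theta_star : T) (i : I) : R := C (theta i) - C theta_star.

Definition avg {R : fieldType} {I : finType} (f : I -> R) : R :=
  (\sum_(i : I) f i) / #|I|%:R.

Definition avg_rel_resolvability {R : fieldType} (gtot avg_mit avg_noisy : R) : R :=
  gtot^-1 * (avg_mit / avg_noisy) ^+ 2.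

Definition Qfun {R : fieldType} (p : R) : R :=
  1 - 3 * p * (2 - p) / (4 - p * (2 - p)).

(* Perfect correction makes the mitigated average equal the noise-free one and
   cost concentration scales the noisy average by A q^L, so the resolvability
   is 1 / (gamma_tot A^2 q^(2L)).  Each single-qubit cost is 1 / Q(p), since
   Q(p) = 4(1-p)^2 / (3 + (1-p)^2); the bounds on Q follow from this form. *)
From mathcomp Require Import all_boot all_order all_algebra.
From mathcomp Require Import ring lra.
Import Order.TTheory GRing.Theory Num.Theory.
Local Open Scope ring_scope.

Lemma pec_costE (R : numFieldType) (p : R) : p != 1 ->
  pec_cost p = (3 + (1 - p) ^+ 2) / (4 * (1 - p) ^+ 2).
Proof.
move=> hp1; have h1p : 1 - p != 0 by rewrite subr_eq0 eq_sym.
rewrite /pec_cost !big_ord_recr big_ord0 /= /pec_coef /=.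
field; exact: h1p.
Qed.

Section QfunReal.
Variable R : realFieldType.
Implicit Types p : R.

Lemma QfunE p : Qfun p = 4 * (1 - p) ^+ 2 / (3 + (1 - p) ^+ 2).
Proof.
have hden : 0 < 3 + (1 - p) ^+ 2 by nra.
by rewrite /Qfun; field; rewrite lt0r_neq0.
Qed.

Lemma pec_cost_Qfun p : p != 1 -> pec_cost p = (Qfun p)^-1.
Proof. by move=> hp1; rewrite pec_costE // QfunE invf_div. Qed.

Lemma Qfun_ge0 p : 0 <= Qfun p.
Proof.
by rewrite QfunE; apply: divr_ge0; [apply: mulr_ge0 | apply: addr_ge0];
  rewrite ?sqr_ge0.
Qed.

Lemma Qfun_lt1 p : 0 < p < 2 -> Qfun p < 1.
Proof.
move=> /andP[p0 p2]; have hden : 0 < 3 + (1 - p) ^+ 2 by nra.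
rewrite QfunE ltr_pdivrMr // mul1r; nra.
Qed.

End QfunReal.

Lemma gamma_totE (R : fieldType) (n L : nat) (p : R) :
  gamma_tot n L p = pec_cost p ^+ (n * L).
Proof. by rewrite /gamma_tot prodr_const card_prod !card_ord. Qed.

Lemma eq_avg {R : fieldType} {I : finType} {f g : I -> R} :
  f =1 g -> avg f = avg g.
Proof. by move=> efg; rewrite /avg (eq_bigr _ (fun i _ => efg i)). Qed.

Lemma avg_rel_resolvability_scaled (R : fieldType) (g a m : R) :
  m != 0 -> avg_rel_resolvability g m (a * m) = (g * a ^+ 2)^-1.
Proof.
move=> m0; rewrite /avg_rel_resolvability (invfM a m) (mulrCA m) divff // mulr1.
by rewrite exprVn (invfM g).
Qed.

Theorem proposition6 (R : realFieldType) (n L : nat) (p A q : R)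
  (T : Type) (I : finType) (theta : I -> T) (theta_star : T)
  (C Ctil Cm : T -> R) :
  0 < p < 1 ->
  A != 0 ->
  0 < q < 1 ->
  (* perfect correction: mitigated cost differences equal noise-free ones *)
  (forall i, dcost Cm theta theta_star i = dcost C theta theta_star i) ->
  (* cost concentration *)
  avg (dcost Ctil theta theta_star) = A * q ^+ L * avg (dcost C theta theta_star) ->
  avg (dcost C theta theta_star) != 0 ->
  avg_rel_resolvability (gamma_tot n L p)
      (avg (dcost Cm theta theta_star)) (avg (dcost Ctil theta theta_star))
    = (A ^+ 2 * q ^+ (2 * L))^-1 * (Qfun p) ^+ (n * L)
  /\ (forall p' : R, 0 < p' <= 1 -> 0 <= Qfun p' < 1).
Proof.
move=> /andP[p0 p1] _ _ mitigated concentration avgC0; split.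
  have p1' : p != 1 by rewrite lt_eqF.
  rewrite (eq_avg mitigated) concentration avg_rel_resolvability_scaled //.
  rewrite gamma_totE pec_cost_Qfun // exprVn exprMn -exprM (mulnC L 2).
  by rewrite invfM invrK mulrC.
move=> p' /andP[p'0 p'1]; rewrite Qfun_ge0 Qfun_lt1 //.
by rewrite p'0 (le_lt_trans p'1) ?ltr1n.
Qed.
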